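(* Let $f:\mathbb{R}\to\mathbb{R}$ be a concave function such that $f(0)=0$, $f$ is differentiable at $0$, $f'(0)\neq 0$, $\sup_x f(x)=M>0$, and $\operatorname{argsup}_x f(x)>0$. Let $\mathbb{P}$ and $\mathbb{Q}$ be probability distributions with support $\mathcal{X}$. Define $$\mathrm{D}^{S}(\mathbb{P},\mathbb{Q})=\sup_{C:\mathcal{X}\to\mathbb{R}}\mathbb{E}_{x\sim\mathbb{P}}[f(C(x))]+\mathbb{E}_{y\sim\mathbb{Q}}[f(-C(y))],$$ $$\mathrm{D}^{Rp}_f(\mathbb{P},\mathbb{Q})=\sup_{C:\mathcal{X}\to\mathbb{R}} 2\,\mathbb{E}_{x\sim\mathbb{P},\,y\sim\mathbb{Q}}\big[f(C(x)-C(y))\big],$$ $$\mathrm{D}^{Ralf}_f(\mathbb{P},\mathbb{Q})=\sup_{C:\mathcal{X}\to\mathbb{R}} 2\,\mathbb{E}_{x\sim\mathbb{P}}\Big[f\big(C(x)-\mathbb{E}_{y\sim\mathbb{Q}}C(y)\big)\Big],$$ $$\mathrm{D}^{Ra}_f(\mathbb{P},\mathbb{Q})=\sup_{C:\mathcal{X}\to\mathbb{R}} \mathbb{E}_{x\sim\mathbb{P}}\Big[f\big(C(x)-\mathbb{E}_{y\sim\mathbb{Q}}C(y)\big)\Big]+\mathbb{E}_{y\sim\mathbb{Q}}\Big[f\big(\mathbb{E}_{x\sim\mathbb{P}}C(x)-C(y)\big)\Big].$$ Then $\mathrm{D}^{S}(\mathbb{P},\mathbb{Q})\le \mathrm{D}^{Rp}_f(\mathbb{P},\mathbb{Q})$,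 $\mathrm{D}^{Rp}_f(\mathbb{P},\mathbb{Q})\le\mathrm{D}^{Ralf}_f(\mathbb{P},\mathbb{Q})$, and $\mathrm{D}^{Rp}_f(\mathbb{P},\mathbb{Q})\le\mathrm{D}^{Ra}_f(\mathbb{P},\mathbb{Q})$.
   Context: The suprema range over (measurable) critic functions $C:\mathcal{X}\to\mathbb{R}$ for which the expectations are defined. The condition $\operatorname{argsup}_x f(x)>0$ means the supremum of $f$ is reached at some positive $x$ (or approached as $x\to+\infty$). *)

From HB Require Import structures.
From mathcomp Require Import all_boot all_order all_algebra.
From mathcomp Require Import all_classical all_reals all_analysis.
Set Implicit Arguments. Unset Strict Implicit. Unset Printing Implicit Defensive.
Import Order.TTheory GRing.Theory Num.Theory.
Import numFieldNormedType.Exports.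
Local Open Scope classical_set_scope.
Local Open Scope ring_scope.

Definition concave (R : realType) (f : R -> R) : Prop :=
  forall (x y t : R), 0 <= t -> t <= 1 ->
    t * f x + (1 - t) * f y <= f (t * x + (1 - t) * y).

Definition critic d (X : measurableType d) (R : realType)
  (P Q : probability X R) (C : X -> R) : Prop :=
  measurable_fun setT C /\
  P.-integrable setT (EFin \o C) /\ Q.-integrable setT (EFin \o C).

Local Open Scope ereal_scope.

Definition D_S d (X : measurableType d) (R : realType) (f : R -> R)
  (P Q : probability X R) : \bar R :=
  ereal_sup [set v | exists C, critic P Q C /\
    v = \int[P]_x (f (C x))%:E + \int[Q]_y (f (- C y)%R)%:E].

(* D^{Rp}_f : E_{x~P, y~Q} with x, y independent, as an iterated integral *)
Definition D_Rp d (X : measurableType d) (R : realType) (f : R -> R)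
  (P Q : probability X R) : \bar R :=
  ereal_sup [set v | exists C, critic P Q C /\
    v = 2%:E * \int[P]_x \int[Q]_y (f (C x - C y)%R)%:E].

Definition D_Ralf d (X : measurableType d) (R : realType) (f : R -> R)
  (P Q : probability X R) : \bar R :=
  ereal_sup [set v | exists C, critic P Q C /\
    v = 2%:E * \int[P]_x (f (C x - Rintegral Q setT C)%R)%:E].

Definition D_Ra d (X : measurableType d) (R : realType) (f : R -> R)
  (P Q : probability X R) : \bar R :=
  ereal_sup [set v | exists C, critic P Q C /\
    v = \int[P]_x (f (C x - Rintegral Q setT C)%R)%:E
      + \int[Q]_y (f (Rintegral P setT C - C y)%R)%:E].

From HB Require Import structures.
From mathcomp Require Import all_boot all_order all_algebra.
From mathcomp Require Import all_classical all_reals all_analysis.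
From mathcomp Require Import ring lra measurable_realfun.
Import Order.TTheory GRing.Theory Num.Theory.
Import numFieldNormedType.Exports.
Local Open Scope classical_set_scope.
Local Open Scope ring_scope.

(* Since f <= M, every integral
   of f composed with a critic lies in [-oo, M]: it is M minus the integral of the
   nonnegative function M - f, so such integrals are monotone and additive, and
   Tonelli's theorem lets us swap iterated ones.  Midpoint concavity
   f a + f (- b) <= 2 f (a / 2 - b / 2), integrated for the critic C / 2, gives
   D^S <= D^Rp.  Jensen's inequality in the inner variable,
   E_y f (C x - C y) <= f (C x - E C), gives D^Rp <= D^Ralf, and together with the
   same bound in the other variable after swapping the integrals, D^Rp <= D^Ra. *)

Section concave_function.
Context {R : realType} {f : R -> R}.
Hypothesis concave_f : concave f.

Lemma concave_chord {u b v : R} : u < b -> b < v ->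
  (b - u) * (f v - f b) <= (v - b) * (f b - f u).
Proof.
move=> ub bv; have vu : 0 < v - u by rewrite subr_gt0 (lt_trans ub bv).
set t := (v - b) / (v - u).
have t0 : 0 <= t by rewrite divr_ge0 //; lra.
have t1 : t <= 1 by rewrite ler_pdivrMr // mul1r; lra.
have := concave_f u v t t0 t1.
have -> : t * u + (1 - t) * v = b by rewrite /t; field; rewrite gt_eqF.
rewrite -(ler_pM2r vu).
have -> : (t * f u + (1 - t) * f v) * (v - u) = (v - b) * f u + (b - u) * f v.
  by rewrite /t; field; rewrite gt_eqF.
nra.
Qed.

Lemma concave_supergradient b : exists s, forall z, f z <= f b + s * (z - b).
Proof.
pose S := [set (f v - f b) / (v - b) | v in [set v | b < v]].
have ubS u : u < b -> ubound S ((f b - f u) / (b - u)).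
  move=> ub _ [v /= bv <-]; have := concave_chord ub bv.
  rewrite ler_pdivrMr ?subr_gt0 // mulrAC ler_pdivlMr ?subr_gt0 //; nra.
have supS : has_sup S.
  split; first by exists ((f (b + 1) - f b) / (b + 1 - b)), (b + 1) => //=; lra.
  by exists ((f b - f (b - 1)) / (b - (b - 1))); apply: ubS; lra.
exists (sup S) => z; case: (ltgtP z b) => [zb|bz|->]; last by rewrite subrr mulr0 addr0.
- have := ge_sup (proj1 supS) (ubS z zb).
  rewrite ler_pdivlMr ?subr_gt0 // => ?; nra.
- have := sup_upper_bound supS (ex_intro2 _ _ z bz erefl : S ((f z - f b) / (z - b))).
  rewrite ler_pdivrMr ?subr_gt0 // => ?; nra.
Qed.

Lemma concave_midpoint x y : f x + f y <= 2 * f ((x + y) / 2).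
Proof.
have h0 : 0 <= 2^-1 :> R by rewrite invr_ge0.
have h1 : 2^-1 <= 1 :> R by rewrite invf_le1 // ler1n.
have := concave_f x y _ h0 h1.
have -> : 2^-1 * x + (1 - 2^-1) * y = (x + y) / 2 by field.
have -> : 2^-1 * f x + (1 - 2^-1) * f y = (f x + f y) / 2 by field.
by rewrite ler_pdivrMr // mulrC.
Qed.

Lemma concave_subl c : concave (fun t => f (c - t)).
Proof.
move=> x y t t0 t1; have := concave_f (c - x) (c - y) _ t0 t1.
by have -> : t * (c - x) + (1 - t) * (c - y) = c - (t * x + (1 - t) * y) by ring.
Qed.

Lemma concave_subr c : concave (fun t => f (t - c)).
Proof.
move=> x y t t0 t1; have := concave_f (x - c) (y - c) _ t0 t1.
by have -> : t * (x - c) + (1 - t) * (y - c) = t * x + (1 - t) * y - c by ring.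
Qed.

Lemma concave_locally_lipschitz b : exists2 K, 0 <= K &
  forall z, `|z - b| <= 1 -> `|f z - f b| <= K * `|z - b|.
Proof.
have [s hs] := concave_supergradient b.
pose L := `|f (b + 1) - f b| + `|f b - f (b - 1)|.
pose K := `|s| + L.
have L0 : 0 <= L by rewrite addr_ge0.
have K0 : 0 <= K by rewrite addr_ge0.
exists K => // z zb1; have zb0 := normr_ge0 (z - b).
have upper : f z - f b <= `|s| * `|z - b|.
  by rewrite -normrM; apply: le_trans (ler_norm _); have := hs z; lra.
have lower : f b - f z <= L * `|z - b|.
  rewrite /L.
  have n1 := ler_norm (f b - f (b + 1)); rewrite distrC in n1.
  have n2 := ler_norm (f b - f (b - 1)).
  have n3 := normr_ge0 (f (b + 1) - f b); have n4 := normr_ge0 (f b - f (b - 1)).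
  case: (lerP b z) => bz.
  - have t0 : 0 <= z - b by rewrite subr_ge0.
    have := concave_f (b + 1) b _ t0 (le_trans (ler_norm _) zb1).
    have -> : (z - b) * (b + 1) + (1 - (z - b)) * b = z by ring.
    have := ler_wpM2l t0 n1; have := mulr_ge0 t0 n4.
    rewrite ger0_norm // in zb1 *; nra.
  - have t0 : 0 <= b - z by rewrite subr_ge0 ltW.
    have t1 : b - z <= 1 by rewrite distrC in zb1; exact: le_trans (ler_norm _) zb1.
    have := concave_f (b - 1) b _ t0 t1.
    have -> : (b - z) * (b - 1) + (1 - (b - z)) * b = z by ring.
    have := ler_wpM2l t0 n2; have := mulr_ge0 t0 n3.
    rewrite ler0_norm ?subr_le0 ?(ltW bz) // opprB in zb1 *; nra.
rewrite ler_norml /K mulrDl.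
have := mulr_ge0 (normr_ge0 s) zb0; have := mulr_ge0 L0 zb0.
by move=> ? ?; apply/andP; split; lra.
Qed.

Lemma concave_continuous : continuous f.
Proof.
move=> b; have [K K0 lipschitz] := concave_locally_lipschitz b.
apply/cvgrPdist_le => e e0; apply/nbhs_normP.
exists (Num.min 1 (e / (K + 1))); first by rewrite /= lt_min ltr01 divr_gt0 //; lra.
move=> z /=; rewrite lt_min => /andP[z1 z2]; rewrite distrC in z1 z2.
rewrite distrC; apply: le_trans (lipschitz z (ltW z1)) _.
have : `|z - b| * (K + 1) <= e by rewrite -ler_pdivlMr; [exact: ltW | lra].
have := normr_ge0 (z - b); nra.
Qed.

End concave_function.

Lemma critic_scale d (X : measurableType d) (R : realType) (P Q : probability X R)
    (C : X -> R) (k : R) :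
  critic P Q C -> critic P Q (fun x => k * C x).
Proof.
move=> [mC [iPC iQC]]; split; first exact: measurable_funM.
rewrite (_ : EFin \o _ = fun x => (k%:E * (EFin \o C) x)%E); last first.
  by apply/funext => x; rewrite /= EFinM.
by split; exact: integrableZl.
Qed.

Local Open Scope ereal_scope.

Lemma le_integral_measurable d (T : measurableType d) (R : realType)
    (mu : {measure set T -> \bar R}) (D : set T) (f g : T -> \bar R) :
  measurable D -> measurable_fun D f -> measurable_fun D g ->
  {in D, forall x, f x <= g x} -> \int[mu]_(x in D) f x <= \int[mu]_(x in D) g x.
Proof.
move=> mD mf mg fg; rewrite integralE [leRHS]integralE leeB //.
- apply: ge0_le_integral => //; [exact: measurable_funepos.. |].
  by move=> x /mem_set; exact: funepos_le.
- apply: ge0_le_integral => //; [exact: measurable_funeneg.. |].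
  by move=> x /mem_set; exact: funeneg_le.
Qed.

Section probability_integral.
Context {d} {T : measurableType d} {R : realType} (P : probability T R).

Lemma probability_integral_cst (c : \bar R) : \int[P]_x c = c.
Proof. by rewrite integral_cst //= probability_setT mule1. Qed.

Lemma integral_cstB_ge0 (K : R) (phi : T -> \bar R) :
  measurable_fun setT phi -> (forall x, 0 <= phi x) ->
  \int[P]_x (K%:E - phi x) = K%:E - \int[P]_x phi x.
Proof.
move=> mphi phi0.
have [phi_fin|] := ltP (\int[P]_x phi x) +oo.
  have iphi : P.-integrable setT phi.
    by apply/integrableP; split => //; under eq_integral do rewrite gee0_abs //.
  rewrite integralB //; first by rewrite probability_integral_cst.
  exact: finite_measure_integrable_cst.
rewrite leye_eq => /eqP phi_oo; rewrite phi_oo /= integralE.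
set g := fun x => K%:E - phi x.
have mg : measurable_fun setT g by apply: emeasurable_funB.
have : \int[P]_x phi x <= \int[P]_x (g^\- x + (Num.max K 0)%:E).
  apply: ge0_le_integral => //.
  - by apply: emeasurable_funD => //; exact: measurable_funeneg.
  - move=> x _; rewrite /g funenegE.
    move: (phi0 x); case: (phi x) => [r r0| _ |] //=.
    have -> : r%:E = (- (K - r))%:E + K%:E by rewrite -EFinD; congr EFin; ring.
    by apply: leeD; rewrite ?lee_fin le_max lexx.
rewrite ge0_integralD //; last 2 first.
- exact: measurable_funeneg.
- by move=> x _; rewrite lee_fin le_max lexx orbT.
rewrite probability_integral_cst phi_oo.
by case: (\int[P]_x g^\- x) => [r| |] //= _; rewrite addeNy.
Qed.

Lemma integral_le_cstE {K : R} {u : T -> \bar R} :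
  measurable_fun setT u -> (forall x, u x <= K%:E) ->
  \int[P]_x u x = K%:E - \int[P]_x (K%:E - u x).
Proof.
move=> mfu uK; rewrite -integral_cstB_ge0.
- by apply: eq_integral => x _; rewrite oppeB ?fin_num_adde_defr // addeA subee // add0e.
- exact: emeasurable_funB.
- by move=> x; rewrite subre_ge0.
Qed.

Lemma integral_le_cst {K : R} {u : T -> \bar R} :
  measurable_fun setT u -> (forall x, u x <= K%:E) -> \int[P]_x u x <= K%:E.
Proof.
move=> mfu uK; rewrite -[leRHS](probability_integral_cst K%:E).
exact: le_integral_measurable.
Qed.

Lemma integralD_le_cst {K L : R} {u v : T -> \bar R} :
  measurable_fun setT u -> measurable_fun setT v ->
  (forall x, u x <= K%:E) -> (forall x, v x <= L%:E) ->
  \int[P]_x (u x + v x) = \int[P]_x u x + \int[P]_x v x.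
Proof.
move=> mfu mfv uK vL.
have subDD a b : adde_def a b -> (K + L)%:E - (a + b) = (K%:E - a) + (L%:E - b).
  by move=> ab; rewrite oppeD // EFinD addeACA.
have uvKL x : u x + v x <= (K + L)%:E by rewrite EFinD leeD.
rewrite (integral_le_cstE (emeasurable_funD mfu mfv) uvKL).
rewrite (integral_le_cstE mfu uK) (integral_le_cstE mfv vL).
have uK0 x : 0 <= K%:E - u x by rewrite subre_ge0.
have vL0 x : 0 <= L%:E - v x by rewrite subre_ge0.
have uv_def x : adde_def (u x) (v x).
  apply: ltpinfty_adde_def; rewrite inE /=.
  - exact: le_lt_trans (uK x) (ltry _).
  - exact: le_lt_trans (vL x) (ltry _).
under eq_integral => x _ do rewrite (subDD _ _ (uv_def x)).
rewrite ge0_integralD //; try exact: emeasurable_funB.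
by rewrite subDD // ge0_adde_def // inE integral_ge0.
Qed.

Lemma integral_EFin_affine (g : T -> R) (c k : R) :
  P.-integrable setT (EFin \o g) ->
  \int[P]_x (c + k * g x)%:E = (c + k * Rintegral P setT g)%:E.
Proof.
move=> ig; under eq_integral do rewrite EFinD EFinM.
rewrite integralD //; [|exact: finite_measure_integrable_cst|exact: integrableZl].
rewrite probability_integral_cst integralZl // EFinD EFinM fineK //.
exact: integrable_fin_num.
Qed.

Lemma concave_jensen (f : R -> R) (g : T -> R) :
  concave f -> measurable_fun setT g -> P.-integrable setT (EFin \o g) ->
  \int[P]_x (f (g x))%:E <= (f (Rintegral P setT g))%:E.
Proof.
move=> cf mg ig; set b := Rintegral P setT g.
have [s hs] := concave_supergradient cf b.
have mf := continuous_measurable_fun (concave_continuous cf).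
apply: (@le_trans _ _ (\int[P]_x ((f b - s * b) + s * g x)%:E)).
  apply: le_integral_measurable => //.
  - by apply/measurable_EFinP; exact: measurableT_comp.
  - by apply/measurable_EFinP; apply: measurable_funD => //; exact: measurable_funM.
  - by move=> x _; rewrite lee_fin; have := hs (g x); lra.
by rewrite integral_EFin_affine // -/b subrK.
Qed.

End probability_integral.

Section iterated_integral.
Context {dX dY} {X : measurableType dX} {Y : measurableType dY} {R : realType}.
Variables (P : probability X R) (Q : probability Y R).

Lemma measurable_fun_integral_le_cst {K : R} {F : X * Y -> \bar R} :
  measurable_fun setT F -> (forall z, F z <= K%:E) ->
  measurable_fun setT (fun x => \int[Q]_y F (x, y)).
Proof.
move=> mF FK; pose G z := K%:E - F z.
have mG : measurable_fun setT G := emeasurable_funB (measurable_cst _) mF.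
have G0 z : 0 <= G z by rewrite subre_ge0.
rewrite (_ : (fun x => _) = fun x => K%:E - \int[Q]_y G (x, y)).
  by apply: emeasurable_funB => //; exact: measurable_fun_fubini_tonelli_F.
apply/funext => x.
by rewrite (integral_le_cstE Q (measurable_fun_pair2 x mF) (fun y => FK (x, y))).
Qed.

Lemma fubini_le_cst {K : R} {F : X * Y -> \bar R} :
  measurable_fun setT F -> (forall z, F z <= K%:E) ->
  \int[P]_x \int[Q]_y F (x, y) = \int[Q]_y \int[P]_x F (x, y).
Proof.
move=> mF FK; pose G z := K%:E - F z.
have mG : measurable_fun setT G := emeasurable_funB (measurable_cst _) mF.
have G0 z : 0 <= G z by rewrite subre_ge0.
under eq_integral => x _ do
  rewrite (integral_le_cstE Q (measurable_fun_pair2 x mF) (fun y => FK (x, y))).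
under [RHS]eq_integral => y _ do
  rewrite (integral_le_cstE P (measurable_fun_pair1 y mF) (fun x => FK (x, y))).
rewrite !integral_cstB_ge0 ?(fubini_tonelli G mG G0) //.
- exact: (measurable_fun_fubini_tonelli_G G mG G0).
- by move=> y; apply: integral_ge0 => x _; exact: G0.
- exact: (measurable_fun_fubini_tonelli_F G mG G0).
- by move=> x; apply: integral_ge0 => y _; exact: G0.
Qed.

Lemma iterated_integralD_le_cst {K L : R} {F G : X * Y -> \bar R} :
  measurable_fun setT F -> measurable_fun setT G ->
  (forall z, F z <= K%:E) -> (forall z, G z <= L%:E) ->
  \int[P]_x \int[Q]_y (F (x, y) + G (x, y)) =
  \int[P]_x \int[Q]_y F (x, y) + \int[P]_x \int[Q]_y G (x, y).
Proof.
move=> mF mG FK GL.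
under eq_integral => x _ do rewrite (integralD_le_cst Q (measurable_fun_pair2 x mF)
  (measurable_fun_pair2 x mG) (fun y => FK (x, y)) (fun y => GL (x, y))).
apply: integralD_le_cst.
- exact: (measurable_fun_integral_le_cst mF FK).
- exact: (measurable_fun_integral_le_cst mG GL).
- by move=> x; apply: (integral_le_cst Q (measurable_fun_pair2 x mF)) => y; exact: FK.
- by move=> x; apply: (integral_le_cst Q (measurable_fun_pair2 x mG)) => y; exact: GL.
Qed.

Lemma le_iterated_integral {K : R} {F G : X * Y -> \bar R} :
  measurable_fun setT F -> measurable_fun setT G ->
  (forall z, G z <= K%:E) -> (forall z, F z <= G z) ->
  \int[P]_x \int[Q]_y F (x, y) <= \int[P]_x \int[Q]_y G (x, y).
Proof.
move=> mF mG GK FG; apply: le_integral_measurable => //.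
- by apply: (measurable_fun_integral_le_cst mF) => z; exact: le_trans (FG z) (GK z).
- exact: (measurable_fun_integral_le_cst mG GK).
- by move=> x _; apply: le_integral_measurable => //; exact: measurable_fun_pair2.
Qed.

Lemma concave_jensen_iterated (M : R) (F : X -> R -> R) (b : Y -> R) :
  (forall x, concave (F x)) -> (forall x t, (F x t <= M)%R) ->
  measurable_fun setT (fun z : X * R => F z.1 z.2) ->
  measurable_fun setT b -> Q.-integrable setT (EFin \o b) ->
  \int[P]_x \int[Q]_y (F x (b y))%:E <= \int[P]_x (F x (Rintegral Q setT b))%:E.
Proof.
move=> cF FM mF mb ib; apply: le_integral_measurable => //.
- apply: (measurable_fun_integral_le_cst (K := M) (F := fun z => (F z.1 (b z.2))%:E));
    last by move=> z; rewrite lee_fin.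
  apply/measurable_EFinP.
  exact: (measurableT_comp (g := fun z : X * Y => (z.1, b z.2)) mF
    (measurable_fun_pair measurable_fst (measurableT_comp mb measurable_snd))).
- by apply/measurable_EFinP; exact: measurable_fun_pair1 _ mF.
- by move=> x _; apply: concave_jensen.
Qed.

End iterated_integral.

Section critic_objectives.
Context {d} {X : measurableType d} {R : realType} (P Q : probability X R).
Variables (f : R -> R) (M : R).
Hypotheses (concave_f : concave f) (f_le_M : forall t, (f t <= M)%R).
Variable C : X -> R.
Hypothesis critic_C : critic P Q C.

Let mf : measurable_fun setT f := continuous_measurable_fun (concave_continuous concave_f).
Let mC : measurable_fun setT C := critic_C.1.
Let fM t : (f t)%:E <= M%:E. Proof. by rewrite lee_fin. Qed.

Lemma S_objective_le_half_pair :
  \int[P]_x (f (C x))%:E + \int[Q]_y (f (- C y))%:E <=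
  2%:E * \int[P]_x \int[Q]_y (f (2^-1 * C x - 2^-1 * C y))%:E.
Proof.
pose fC (z : X * X) := (f (C z.1))%:E.
pose fNC (z : X * X) := (f (- C z.2))%:E.
pose fw (z : X * X) := (f (2^-1 * C z.1 - 2^-1 * C z.2))%:E.
have mfC : measurable_fun setT fC.
  by apply/measurable_EFinP; do 2 apply: measurableT_comp => //.
have mfNC : measurable_fun setT fNC.
  apply/measurable_EFinP; apply: measurableT_comp => //; apply: measurable_funN.
  exact: measurableT_comp.
have mfw : measurable_fun setT fw.
  apply/measurable_EFinP; apply: measurableT_comp => //.
  by apply: measurable_funB; apply: measurable_funM => //; exact: measurableT_comp.
have midpoint z : fC z + fNC z <= fw z + fw z.
  rewrite -!EFinD lee_fin /fC /fNC /fw.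
  have := concave_midpoint concave_f (C z.1) (- C z.2).
  have -> : ((C z.1 + - C z.2) / 2 = 2^-1 * C z.1 - 2^-1 * C z.2)%R by field.
  lra.
have -> : \int[P]_x (f (C x))%:E + \int[Q]_y (f (- C y))%:E =
    \int[P]_x \int[Q]_y (fC (x, y) + fNC (x, y)).
  rewrite (iterated_integralD_le_cst P Q mfC mfNC (fun=> fM _) (fun=> fM _)).
  rewrite /fC /fNC /=; congr (_ + _); last by rewrite probability_integral_cst.
  by apply: eq_integral => x _; rewrite probability_integral_cst.
apply: le_trans (le_iterated_integral P Q (emeasurable_funD mfC mfNC)
  (emeasurable_funD mfw mfw) (fun z => leeD (fM _) (fM _)) midpoint) _.
by rewrite (iterated_integralD_le_cst P Q mfw mfw (fun=> fM _) (fun=> fM _)) mule_natl mule2n.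
Qed.

Lemma pair_integral_le_centered_Q :
  \int[P]_x \int[Q]_y (f (C x - C y))%:E <= \int[P]_x (f (C x - Rintegral Q setT C))%:E.
Proof.
apply: (concave_jensen_iterated P Q M (fun x t => f (C x - t))) => //.
- by move=> x; exact: concave_subl.
- apply: measurableT_comp => //.
  exact: measurable_funB (measurableT_comp mC measurable_fst) measurable_snd.
- exact: critic_C.2.2.
Qed.

Lemma pair_integral_le_centered_P :
  \int[P]_x \int[Q]_y (f (C x - C y))%:E <= \int[Q]_y (f (Rintegral P setT C - C y))%:E.
Proof.
have mdiff : measurable_fun setT (fun z : X * X => (f (C z.1 - C z.2))%:E).
  apply/measurable_EFinP; apply: measurableT_comp => //.
  exact: measurable_funB (measurableT_comp mC measurable_fst)
    (measurableT_comp mC measurable_snd).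
rewrite (fubini_le_cst P Q mdiff (fun=> fM _)) /=.
apply: (concave_jensen_iterated Q P M (fun y t => f (t - C y))) => //.
- by move=> y; exact: concave_subr.
- apply: measurableT_comp => //.
  exact: measurable_funB measurable_snd (measurableT_comp mC measurable_fst).
- exact: critic_C.2.1.
Qed.

End critic_objectives.

Local Close Scope ereal_scope.

Theorem mainTheorem3 (R : realType) (f : R -> R) (M : R)
  (d : measure_display) (X : measurableType d) (P Q : probability X R) :
  concave f ->
  f 0 = 0 ->
  derivable f 0 1 ->
  derive1 f 0 != 0 ->
  (forall x, f x <= M) ->
  (forall e : R, 0 < e -> exists x, M - e < f x) ->
  0 < M ->
  ((exists x0, 0 < x0 /\ f x0 = M) \/ (f x @[x --> +oo] --> M)) ->
  (D_S f P Q <= D_Rp f P Q)%E /\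
  (D_Rp f P Q <= D_Ralf f P Q)%E /\
  (D_Rp f P Q <= D_Ra f P Q)%E.
Proof.
move=> concave_f _ _ _ f_le_M _ _ _.
split; [|split]; apply: ge_ereal_sup => _ [C [critic_C ->]]; apply: le_ereal_sup_tmp.
- exists (2%:E * \int[P]_x \int[Q]_y (f (2^-1 * C x - 2^-1 * C y))%:E)%E.
    by exists (fun x => 2^-1 * C x); split => //; exact: critic_scale.
  exact: S_objective_le_half_pair.
- eexists; first by exists C.
  by apply: lee_wpmul2l => //; exact: pair_integral_le_centered_Q.
- eexists; first by exists C.
  rewrite mule_natl mule2n; apply: leeD.
  + exact: pair_integral_le_centered_Q.
  + exact: pair_integral_le_centered_P.
Qed.
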